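(* Let $A$ be a meet-semilattice and $\kappa$ a regular cardinal. Then $A$ is a $\kappa$-frame if and only if $\mathcal{BL}_\kappa A=A$.
   Context: A meet-semilattice is a poset with all finite meets. An existing join $\bigvee S$ is distributive if $a\wedge\bigvee S=\bigvee\{a\wedge s:s\in S\}$ for all $a$. A D-ideal of $A$ is a downset containing $\bigvee S$ for each subset $S$ of it with distributive join; $\mathcal{BL} A$ is the frame of D-ideals ordered by inclusion, and $A$ is identified with the sub-meet-semilattice $\{{\downarrow}a:a\in A\}$ of $\mathcal{BL} A$. A $\kappa$-join is a join of fewer than $\kappa$ elements; $A$ is a $\kappa$-frame if all $\kappa$-joins exist in $A$ and are distributive. $\mathcal{BL}_\kappa A$ is the sub-$\kappa$-frame of $\mathcal{BL} A$ generated by $A$ (the smallest subset containing $A$ closed under finite meets and $\kappa$-joins computed in $\mathcal{BL} A$). *)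

(* A meet-semilattice (with all finite meets, hence a top)
   is a [tMeetSemilatticeType d]. A cardinal kappa is represented by a type K
   (of cardinality kappa). *)
From HB Require Import structures.
From mathcomp Require Import all_boot all_order.
Set Implicit Arguments. Unset Strict Implicit. Unset Printing Implicit Defensive.
Import Order.TTheory.
Local Open Scope order_scope.

Definition card_lt (X K : Type) : Prop :=
  (exists f : X -> K, injective f) /\ ~ (exists g : K -> X, injective g).

(* K is (the underlying set of) a regular cardinal: infinite, and not a union
   of fewer than |K| subsets each of size < |K|. *)
Definition regular_card (K : Type) : Prop :=
  (exists f : nat -> K, injective f) /\
  forall (I : Type) (X : I -> K -> Prop),
    card_lt I K -> (forall i, card_lt {k : K | X i k} K) ->
    exists k : K, forall i, ~ X i k.

Section BL.
Context {d : Order.disp_t} (A : tMeetSemilatticeType d).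

Definition is_join (S : A -> Prop) (s : A) : Prop :=
  (forall x, S x -> x <= s) /\ (forall u, (forall x, S x -> x <= u) -> s <= u).

Definition dist_join (S : A -> Prop) (s : A) : Prop :=
  is_join S s /\
  forall a : A, is_join (fun y => exists2 x, S x & y = a `&` x) (a `&` s).

Definition Dideal (I : A -> Prop) : Prop :=
  (forall x y : A, y <= x -> I x -> I y) /\
  (forall (S : A -> Prop) (s : A), (forall x, S x -> I x) -> dist_join S s -> I s).

Definition principal (a : A) : A -> Prop := fun x => x <= a.

(* join in the frame BL A of a family F of D-ideals: the least D-ideal
   containing all members of F *)
Definition BLjoin (F : (A -> Prop) -> Prop) : A -> Prop :=
  fun x => forall J, Dideal J -> (forall I y, F I -> I y -> J y) -> J x.

Definition kappa_frame (K : Type) : Prop :=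
  forall S : A -> Prop, card_lt {x : A | S x} K -> exists s, dist_join S s.

(* a family of subsets of A containing A (as principal downsets), closed under
   finite meets (intersections, including the empty one) and kappa-joins
   computed in BL A *)
Definition BLk_closed (K : Type) (P : (A -> Prop) -> Prop) : Prop :=
  [/\ forall a, P (principal a),
      P (fun _ => True),
      forall I J, P I -> P J -> P (fun x => I x /\ J x)
    & forall F, (forall I, F I -> P I) -> card_lt {I : A -> Prop | F I} K ->
        P (BLjoin F)].

(* membership in BL_kappa A: the sub-kappa-frame of BL A generated by A *)
Definition BLk (K : Type) (I : A -> Prop) : Prop :=
  Dideal I /\ forall P, BLk_closed K P -> P I.

End BL.
Arguments kappa_frame {d} A K.
Arguments BLk {d} A K I.

From HB Require Import structures.
From mathcomp Require Import all_boot all_order.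
From Stdlib Require Import FunctionalExtensionality PropExtensionality.
From Stdlib Require Import ClassicalEpsilon ProofIrrelevance.
Import Order.TTheory.
Local Open Scope order_scope.

(* If s is a distributive join of S, then the join in BL A of the principal
   ideals of the elements of S is the principal ideal of s: it is a D-ideal
   containing S, and every D-ideal containing S contains s.  So when A is a
   kappa-frame the principal ideals are closed under kappa-joins in BL A, and
   BL_kappa A = A.  Conversely, if that join is the principal ideal of some s,
   then s bounds S and lies below every upper bound u of S, since the principal
   ideal of u is a D-ideal; it is distributive because every set
   {y | a `&` y <= u} is a D-ideal as well. *)

Lemma card_lt_inj (X Y K : Type) (f : Y -> X) :
  injective f -> card_lt X K -> card_lt Y K.
Proof.
move=> finj [[g ginj] noK]; split; first by exists (g \o f) => x y /ginj /finj.
by move=> [h hinj]; apply: noK; exists (f \o h) => x y /finj /hinj.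
Qed.

Section PrincipalJoins.
Context {d : Order.disp_t} {A : tMeetSemilatticeType d} {K : Type}.

Definition is_principal (I : A -> Prop) : Prop :=
  exists a, forall x, I x <-> principal a x.

Definition principals (S : A -> Prop) : (A -> Prop) -> Prop :=
  fun I => exists x, S x /\ I = principal x.

Lemma principal_Dideal (a : A) : Dideal (principal a).
Proof.
split=> [x y yx xa | S s Sa [[_ s_least] _]]; first exact: le_trans yx xa.
exact: s_least.
Qed.

Lemma meet_le_Dideal (a u : A) : Dideal (fun y => a `&` y <= u).
Proof.
split=> [x y yx axu | S s Su [_ /(_ a) [_ as_least]]].
  by apply: le_trans axu; rewrite leI2.
by apply: as_least => _ [x Sx ->]; exact: Su.
Qed.

Lemma BLjoin_Dideal (F : (A -> Prop) -> Prop) : Dideal (BLjoin F).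
Proof.
split=> [x y yx Fx J DJ FJ | S s SF sS J DJ FJ].
  exact: (proj1 DJ) x y yx (Fx J DJ FJ).
exact: (proj2 DJ) S s (fun x Sx => SF x Sx J DJ FJ) sS.
Qed.

Lemma principal_inj : injective (@principal _ A).
Proof.
move=> a b eab; apply/le_anti/andP; split.
  by change (principal b a); rewrite -eab /principal lexx.
by change (principal a b); rewrite eab /principal lexx.
Qed.

Lemma is_principalE {I : A -> Prop} : is_principal I -> exists a, I = principal a.
Proof.
move=> [a Ia]; exists a; apply: functional_extensionality => x.
exact: propositional_extensionality.
Qed.

Lemma principal_BLk (a : A) : BLk A K (principal a).
Proof. by split=> [|P [Pa _ _ _]]; [exact: principal_Dideal | exact: Pa]. Qed.

Lemma BLjoin_principals (S : A -> Prop) (s : A) :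
  dist_join S s -> forall x, BLjoin (principals S) x <-> principal s x.
Proof.
move=> sS x; split=> [Fx | xs J DJ FJ].
  apply: Fx; first exact: principal_Dideal.
  by move=> _ y [z [Sz ->]] yz; exact: le_trans yz (sS.1.1 z Sz).
apply: (proj1 DJ s x xs (proj2 DJ S s _ sS)) => z Sz.
by apply: (FJ (principal z)); [exists z | exact: lexx].
Qed.

Lemma dist_join_BLjoin_principals (S : A -> Prop) (s : A) :
  (forall x, BLjoin (principals S) x <-> principal s x) -> dist_join S s.
Proof.
move=> Fs; have Fs_s : BLjoin (principals S) s by apply/Fs; exact: lexx.
have s_ub x : S x -> x <= s.
  move=> Sx; apply/Fs => J DJ FJ.
  by apply: (FJ (principal x)); [exists x | exact: lexx].
split; first split=> // u u_ub.
  apply: Fs_s (principal_Dideal u) _ => _ y [x [Sx ->]] yx.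
  exact: le_trans yx (u_ub x Sx).
move=> a; split=> [_ [x Sx ->] | u u_ub]; first by rewrite leI2 ?s_ub.
apply: Fs_s (meet_le_Dideal a u) _ => _ y [x [Sx ->]] yx.
by apply: le_trans (u_ub (a `&` x) _); [rewrite leI2 | exists x].
Qed.

Lemma principals_preimage {F : (A -> Prop) -> Prop} :
  (forall I, F I -> is_principal I) -> F = principals (fun x => F (principal x)).
Proof.
move=> Fp; apply: functional_extensionality => I.
apply: propositional_extensionality; split=> [FI | [x [Fx ->]] //].
by have [a eIa] := is_principalE (Fp I FI); exists a; rewrite -eIa.
Qed.

Lemma card_lt_principal_preimage {F : (A -> Prop) -> Prop} :
  card_lt {I | F I} K -> card_lt {x | F (principal x)} K.
Proof.
apply: (@card_lt_inj _ _ _ (fun p => exist F _ (svalP p))).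
move=> [a Fa] [b Fb] /(congr1 sval) /= /principal_inj eab; subst b.
by rewrite (proof_irrelevance _ Fa Fb).
Qed.

Lemma card_lt_principals (S : A -> Prop) :
  card_lt {x | S x} K -> card_lt {I | principals S I} K.
Proof.
pose gen (p : {I | principals S I}) :=
  constructive_indefinite_description _ (svalP p).
apply: (@card_lt_inj _ _ _ (fun p => exist S _ (proj1 (svalP (gen p))))).
move=> p q /(congr1 sval) /= gen_pq.
have epq : sval p = sval q.
  by rewrite (proj2 (svalP (gen p))) (proj2 (svalP (gen q))) gen_pq.
move: p q epq {gen_pq} => [I SI] [J SJ] /= eIJ; subst J.
by rewrite (proof_irrelevance _ SI SJ).
Qed.

Lemma kappa_frame_BLk_closed : kappa_frame A K -> BLk_closed K is_principal.
Proof.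
move=> KF; split.
- by move=> a; exists a.
- by exists \top => x; split=> // _; exact: lex1.
- move=> I J [a Ia] [b Jb]; exists (a `&` b) => x; rewrite /principal lexI.
  by split=> [[/Ia -> /Jb ->] | /andP [/Ia ? /Jb ?]].
- move=> F Fp cardF; rewrite (principals_preimage Fp).
  have [s sS] := KF _ (card_lt_principal_preimage cardF).
  by exists s; exact: BLjoin_principals.
Qed.

Lemma BLk_BLjoin_principals {S : A -> Prop} :
  card_lt {x | S x} K -> BLk A K (BLjoin (principals S)).
Proof.
move=> cardS; split=> [|P [Pa _ _ Pjoin]]; first exact: BLjoin_Dideal.
apply: Pjoin; last exact: card_lt_principals.
by move=> _ [x [_ ->]].
Qed.

End PrincipalJoins.

Theorem theorem4p2 (d : Order.disp_t) (A : tMeetSemilatticeType d) (K : Type) :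
  regular_card K ->
  (kappa_frame A K <->
   (forall I : A -> Prop,
      BLk A K I <-> exists a : A, forall x : A, I x <-> principal a x)).
Proof.
move=> _; split=> [KF I | BLk_principal S cardS].
  split=> [[_ BLkI] | /is_principalE [a ->]]; last exact: principal_BLk.
  exact: BLkI _ (kappa_frame_BLk_closed KF).
have [s Fs] := (BLk_principal _).1 (BLk_BLjoin_principals cardS).
by exists s; exact: dist_join_BLjoin_principals.
Qed.
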